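(* For any non-splitting CSS code, none of the gates $H$, $PH$, $HP$ (single-qubit) and $\mathsf{CNOT}$ (two-qubit) is $1$-local-Clifford partially addressable.
   Context: A CSS code $\mathsf{CSS}(A,B)$ on $n$ qubits is given by subspaces $A,B\subseteq\mathbb{F}_2^n$ with $a\cdot b=0$ for all $a\in A,b\in B$; its codespace is the common $+1$-eigenspace of all $X^a$ ($a\in A$) and $Z^b$ ($b\in B$), where $G^a=\bigotimes_{i:a_i=1}G_i$. A logical operator is a unitary preserving the codespace. A subspace $A\subseteq\mathbb{F}_2^n$ splits on a non-empty $h\subsetneq\{1,\dots,n\}$ if $A=A_1\oplus A_2$ with $A_1$ having support $h$ and $A_2$ supported on the complement of $h$; the code splits on $h$ if both $A$ and $B$ do, and is non-splitting if it splits on no such $h$. $P=\mathrm{diag}(1,i)$, $H$ is Hadamard. A $1$-local Clifford circuit is a tensor product of single-qubit Clifford gates. Fix logical Pauli operators $\bar X_j,\bar Z_j$ for the $k$ logical qubits; a logical operator $G$ has logical action $\bar W$ ($W=\sum_j\alpha_jW_j$ in the Pauli basis) if $G|\psi\rangle=\sum_j\alpha_j\bar W_j|\psi\rangle$ for all codestates. A $p$-qubit unitary $U$ is $1$-local-Clifford partially addressable on the code if there exist a set $I$ of pairwise disjoint ordered $p$-tuples of logical qubits, $I\neq\emptyset$ and not covering all logical qubits, and a $1$-local Clifford circuit that is a logical operator whose logical action is $\bar U$ on each tuple of $I$ (identity on the remaining logical qubits). *)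

(* Qubit states/operators are represented by kernels over
   computational-basis bit strings 'rV['F_2]_n, with complex amplitudes in algC. *)
From HB Require Import structures.
From mathcomp Require Import all_boot all_order all_algebra all_field.
Set Implicit Arguments. Unset Strict Implicit. Unset Printing Implicit Defensive.
Import GRing.Theory Num.Theory.
Local Open Scope ring_scope.

Notation bits n := 'rV['F_2]_n.

Definition dotF2 n (a b : bits n) : 'F_2 := (a *m b^T) 0 0.
Definition sgn2 (c : 'F_2) : algC := if c == 0 then 1 else -1.

Definition state n := bits n -> algC.
Definition op n := bits n -> bits n -> algC.

Definition opapp n (U : op n) (psi : state n) : state n :=
  fun x => \sum_y U x y * psi y.
Definition opmul n (U V : op n) : op n := fun x y => \sum_z U x z * V z y.
Definition opid n : op n := fun x y => (x == y)%:R.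
Definition adj n (U : op n) : op n := fun x y => (U y x)^*.
Definition unitary n (U : op n) : Prop :=
  forall x y, opmul U (adj U) x y = @opid n x y.

Definition Xop n (a : bits n) : op n := fun x y => (x == y + a)%:R.
Definition Zop n (b : bits n) : op n := fun x y => (x == y)%:R * sgn2 (dotF2 b y).
Definition XZ n (a b : bits n) : op n := opmul (Xop a) (Zop b).

Definition css_orth n (A B : {vspace bits n}) : Prop :=
  forall a b, a \in A -> b \in B -> dotF2 a b = 0.

Definition in_code n (A B : {vspace bits n}) (psi : state n) : Prop :=
  (forall a, a \in A -> forall x, opapp (Xop a) psi x = psi x) /\
  (forall b, b \in B -> forall x, opapp (Zop b) psi x = psi x).

Definition logical_op n (A B : {vspace bits n}) (G : op n) : Prop :=
  unitary G /\ forall psi, in_code A B psi -> in_code A B (opapp G psi).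

Definition supp_in n (h : {set 'I_n}) (v : bits n) : Prop :=
  forall i, i \notin h -> v 0 i = 0.
Definition vsplits n (A : {vspace bits n}) (h : {set 'I_n}) : Prop :=
  exists A1 A2 : {vspace bits n},
    [/\ (A1 + A2)%VS = A, directv (A1 + A2),
        (forall v, v \in A1 -> supp_in h v) &
        (forall v, v \in A2 -> supp_in (~: h) v)].
Definition code_splits n (A B : {vspace bits n}) (h : {set 'I_n}) : Prop :=
  vsplits A h /\ vsplits B h.
Definition nonsplitting n (A B : {vspace bits n}) : Prop :=
  forall h : {set 'I_n}, h != set0 -> h != setT -> ~ code_splits A B h.

Definition clifford1 (g : op 1) : Prop :=
  unitary g /\
  forall a b : bits 1, exists (c : algC) (a' b' : bits 1),
    forall x y, opmul (opmul g (XZ a b)) (adj g) x y = c * XZ a' b' x y.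

Definition tens n (g : 'I_n -> op 1) : op n :=
  fun x y => \prod_q g q (\row_(j < 1) x 0 q) (\row_(j < 1) y 0 q).

(* CSS-type logical Pauli operators: row j of LX (resp. LZ) is x_j (resp. z_j),
   with  Xbar_j = X^{x_j}, Zbar_j = Z^{z_j}. *)
Definition logical_paulis n k (A B : {vspace bits n}) (LX LZ : 'M['F_2]_(k, n)) : Prop :=
  [/\ (\dim A + \dim B + k)%N = n,
      LX *m LZ^T = 1%:M,
      (forall b, b \in B -> LX *m b^T = 0) &
      (forall a, a \in A -> LZ *m a^T = 0)].

Definition lbar n k (LX LZ : 'M['F_2]_(k, n)) (s t : bits k) : op n :=
  XZ (s *m LX) (t *m LZ).

Definition has_logical_action n k (A B : {vspace bits n}) (LX LZ : 'M['F_2]_(k, n))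
    (G : op n) (W : op k) : Prop :=
  exists alpha : bits k -> bits k -> algC,
    (forall x y, W x y = \sum_s \sum_t alpha s t * XZ s t x y) /\
    (forall psi, in_code A B psi ->
       forall x, opapp G psi x = \sum_s \sum_t alpha s t * opapp (lbar LX LZ s t) psi x).

Definition restr k p (tau : {ffun 'I_p -> 'I_k}) (x : bits k) : bits p :=
  \row_j x 0 (tau j).

(* U on each tuple of I, identity on the remaining logical qubits *)
Definition embed k p (I : {set {ffun 'I_p -> 'I_k}}) (U : op p) : op k :=
  fun x y =>
    (\prod_(tau in I) U (restr tau x) (restr tau y)) *
    \prod_(j : 'I_k | [forall tau in I, j \notin codom tau]) (x 0 j == y 0 j)%:R.

Definition valid_tuples k p (I : {set {ffun 'I_p -> 'I_k}}) : Prop :=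
  [/\ I != set0,
      (forall tau, tau \in I -> injective tau),
      (forall tau1 tau2, tau1 \in I -> tau2 \in I -> tau1 != tau2 ->
          [disjoint codom tau1 & codom tau2]) &
      (exists j : 'I_k, forall tau, tau \in I -> j \notin codom tau)].

Definition partially_addressable n k (A B : {vspace bits n})
    (LX LZ : 'M['F_2]_(k, n)) p (U : op p) : Prop :=
  exists I : {set {ffun 'I_p -> 'I_k}}, valid_tuples I /\
  exists g : 'I_n -> op 1,
    [/\ forall q, clifford1 (g q), logical_op A B (tens g) &
        has_logical_action A B LX LZ (tens g) (embed I U)].

Definition Hgate : op 1 := fun x y => sgn2 (dotF2 x y) / sqrtC 2.
Definition Pgate : op 1 :=
  fun x y => (x == y)%:R * (if x 0 0 == 0 then 1 else 'i).
Definition PHgate : op 1 := opmul Pgate Hgate.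
Definition HPgate : op 1 := opmul Hgate Pgate.
(* CNOT with control = first qubit of the tuple: |y0,y1> |-> |y0, y1+y0> *)
Definition CNOTgate : op 2 :=
  fun x y => (x == \row_(j < 2) (if j == ord0 then y 0 ord0 else y 0 ord_max + y 0 ord0))%:R.

(* A 1-local Clifford circuit G conjugates X_q to X^(e_q) Z^(f_q) and Z_q to
   X^(c_q) Z^(d_q) up to phases, with e_q d_q + c_q f_q = 1 because conjugation
   preserves commutation phases.  If G is logical it maps stabilizers to
   stabilizers (two Paulis acting alike on G(code) differ by an element of A x B),
   so A.e, B.c <= A and A.f, B.d <= B, where u.e is the coordinatewise product.
   The map (u, v) |-> (u.e + v.c, u.f + v.d) is then a bijection of A x B, which
   also gives A.d <= A and B.e <= B.  A space stable under a coordinate mask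
   splits along its support, so for a non-splitting code e and d are constant.
   If d = 0 (resp. e = 0), G turns the logical Z (resp. X) of a logical qubit
   outside the tuples into an operator without Z-part (resp. X-part), although it
   acts trivially there.  If e = d = 1, G keeps the X-part of X-type Paulis and
   the Z-part of Z-type Paulis modulo stabilizers; but H, PH and CNOT change the
   X-part of an X-type Pauli and HP the Z-part of a Z-type one. *)

From HB Require Import structures.
From mathcomp Require Import all_boot all_order all_algebra all_field.
From mathcomp Require Import zify ring.
Import GRing.Theory Num.Theory.
Set Implicit Arguments. Unset Strict Implicit. Unset Printing Implicit Defensive.
Local Open Scope ring_scope.

(** * Arithmetic over F_2 and signs *)

Lemma F2_01 (c : 'F_2) : c = 0 \/ c = 1.
Proof.
case: c => -[|[|m]] Hm //; [left | right]; exact/val_inj.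
Qed.

Lemma pchar_F2 : (2 \in [pchar 'F_2])%N.
Proof. exact: pchar_Fp. Qed.

Lemma F2_addrr (c : 'F_2) : c + c = 0.
Proof. exact: addrr_pchar2 pchar_F2 c. Qed.

Lemma bits_addrr n (u : bits n) : u + u = 0.
Proof. by apply/matrixP => i j; rewrite !mxE F2_addrr. Qed.

Lemma bits_addrK n (u v : bits n) : u + v + v = u.
Proof. by rewrite -addrA bits_addrr addr0. Qed.

Lemma bits_addr_eq0 n (u v : bits n) : (u + v == 0) = (u == v).
Proof. by rewrite -(inj_eq (addIr v)) bits_addrK add0r. Qed.

Lemma bits_eq_add n (x y d : bits n) : (x == y + d) = (x + d == y).
Proof.
by apply/eqP/eqP => [-> | <-]; rewrite bits_addrK.
Qed.

Lemma sum_bits_shift n (V : nmodType) (u : bits n) (f : bits n -> V) :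
  \sum_y f (y + u) = \sum_y f y.
Proof. by rewrite [RHS](reindex_inj (addIr u)). Qed.

Lemma sum_delta (T : finType) (R : pzSemiRingType) (z : T) (f : T -> R) :
  \sum_y (y == z)%:R * f y = f z.
Proof.
rewrite (bigD1 z) //= eqxx mul1r big1 ?addr0 // => y /negbTE ->.
by rewrite mul0r.
Qed.

Lemma sgn2_0 : sgn2 0 = 1. Proof. by []. Qed.

Lemma sgn2D a b : sgn2 (a + b) = sgn2 a * sgn2 b.
Proof.
by case: (F2_01 a) => ->; case: (F2_01 b) => ->;
  rewrite /sgn2 /= ?mul1r ?mulr1 ?mulrNN ?mulr1.
Qed.

Lemma sgn2_sqr a : sgn2 a * sgn2 a = 1.
Proof. by rewrite -sgn2D F2_addrr. Qed.

Lemma sgn2_neq0 a : sgn2 a != 0.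
Proof. by case: (F2_01 a) => ->; rewrite /sgn2 /= ?oppr_eq0 oner_eq0. Qed.

Lemma sgn2_inj : injective sgn2.
Proof.
have N1 : (1 : algC) != -1.
  by rewrite -addr_eq0 -(natrD _ 1 1) pnatr_eq0.
by move=> a b; case: (F2_01 a) => ->; case: (F2_01 b) => -> // /eqP;
  rewrite /sgn2 /= ?(negbTE N1) // eq_sym (negbTE N1).
Qed.

Lemma sgn2_sum (I : finType) (P : pred I) (f : I -> 'F_2) :
  sgn2 (\sum_(i | P i) f i) = \prod_(i | P i) sgn2 (f i).
Proof. exact: (big_morph sgn2 sgn2D). Qed.

Lemma dotE n (a b : bits n) : dotF2 a b = \sum_q a 0 q * b 0 q.
Proof. by rewrite /dotF2 mxE; apply: eq_bigr => q _; rewrite mxE. Qed.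

Lemma dotC n (a b : bits n) : dotF2 a b = dotF2 b a.
Proof. by rewrite !dotE; apply: eq_bigr => q _; rewrite mulrC. Qed.

Lemma dotDl n (a b c : bits n) : dotF2 (a + b) c = dotF2 a c + dotF2 b c.
Proof. by rewrite !dotE -big_split; apply: eq_bigr => q _; rewrite mxE mulrDl. Qed.

Lemma dotDr n (a b c : bits n) : dotF2 c (a + b) = dotF2 c a + dotF2 c b.
Proof. by rewrite dotC dotDl !(dotC c). Qed.

Lemma dot0l n (a : bits n) : dotF2 0 a = 0.
Proof. by rewrite dotE big1 // => q _; rewrite mxE mul0r. Qed.

Lemma dot0r n (a : bits n) : dotF2 a 0 = 0.
Proof. by rewrite dotC dot0l. Qed.

Lemma dot_delta n (j : 'I_n) (w : bits n) : dotF2 'e_j w = w 0 j.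
Proof.
rewrite dotE (bigD1 j) //= mxE !eqxx mul1r big1 ?addr0 // => i /negbTE ij.
by rewrite mxE ij andbF mul0r.
Qed.

Lemma dot_eq0 n (w : bits n) : (forall s, dotF2 s w = 0) -> w = 0.
Proof. by move=> w0; apply/rowP => j; rewrite -dot_delta w0 mxE. Qed.

Lemma dot_mulmx m n (M : 'M['F_2]_(m, n)) (u : bits m) (v : bits n) :
  dotF2 (u *m M) v = dotF2 u (v *m M^T).
Proof. by rewrite /dotF2 trmx_mul trmxK mulmxA. Qed.

(** * Pauli operators and Clifford frames *)

Lemma kernel_mul1C (T : finType) (U V : T -> T -> algC) :
  (forall x y, \sum_z U x z * V z y = (x == y)%:R) ->
  forall x y, \sum_z V x z * U z y = (x == y)%:R.
Proof.
move=> UV x y.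
pose M (F : T -> T -> algC) := \matrix_(i, j < #|T|) F (enum_val i) (enum_val j).
have sumE (F : T -> algC) : \sum_z F z = \sum_(l < #|T|) F (enum_val l).
  by rewrite (reindex _ (onW_bij _ (enum_val_bij T))).
have /mulmx1C/matrixP/(_ (enum_rank x) (enum_rank y)) : M U *m M V = 1%:M.
  apply/matrixP => i j; rewrite !mxE -(inj_eq enum_val_inj) -UV sumE.
  by apply: eq_bigr => l _; rewrite !mxE.
rewrite !mxE (inj_eq enum_rank_inj) => <-.
by rewrite sumE; apply: eq_bigr => l _; rewrite !mxE !enum_rankK.
Qed.

Lemma unitary_adj_mul n (U : op n) : unitary U ->
  forall x y, opmul (adj U) U x y = opid x y.
Proof. by move=> HU; apply: kernel_mul1C; apply: HU. Qed.

Lemma unitary_col_neq0 n (U : op n) y : unitary U -> exists x, U x y != 0.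
Proof.
move=> /unitary_adj_mul /(_ y y); rewrite /opmul /adj /opid eqxx => U1.
have [x Ux | U0] := pickP (fun x => U x y != 0); first by exists x.
move: U1; rewrite big1 => [/eqP | x _]; first by rewrite eq_sym oner_eq0.
by rewrite (eqP (negbFE (U0 x))) mulr0.
Qed.

Definition pauli n (u v : bits n) (psi : state n) : state n :=
  fun x => sgn2 (dotF2 v (x + u)) * psi (x + u).

Lemma XZE n (a b : bits n) x y : XZ a b x y = (x == y + a)%:R * sgn2 (dotF2 b y).
Proof.
rewrite /XZ /opmul /Xop /Zop (bigD1 y) //= eqxx mul1r big1 ?addr0 //.
by move=> z /negbTE zy; rewrite zy mul0r mulr0.
Qed.

Lemma opapp_XZ n (a b : bits n) psi x : opapp (XZ a b) psi x = pauli a b psi x.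
Proof.
rewrite /opapp -(sum_bits_shift a) (bigD1 x) //= XZE bits_addrK eqxx mul1r.
rewrite big1 ?addr0 // => y /negbTE yx.
by rewrite XZE bits_addrK eq_sym yx !mul0r.
Qed.

Lemma opapp_X n (a : bits n) psi x : opapp (Xop a) psi x = pauli a 0 psi x.
Proof.
by rewrite -opapp_XZ; apply: eq_bigr => y _; rewrite XZE dot0l mulr1.
Qed.

Lemma opapp_Z n (b : bits n) psi x : opapp (Zop b) psi x = pauli 0 b psi x.
Proof.
rewrite -opapp_XZ; apply: eq_bigr => y _.
by rewrite XZE addr0 /Zop.
Qed.

Lemma pauli0 n (psi : state n) x : pauli 0 0 psi x = psi x.
Proof. by rewrite /pauli addr0 dot0l mul1r. Qed.

Definition inner n (f g : state n) : algC := \sum_x (f x)^* * g x.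

Lemma inner_sum n (I : finType) (c d : I -> algC) (f g : I -> state n) :
  inner (fun x => \sum_i c i * f i x) (fun x => \sum_j d j * g j x) =
  \sum_i \sum_j (c i)^* * d j * inner (f i) (g j).
Proof.
rewrite /inner.
transitivity (\sum_x \sum_i \sum_j (c i)^* * d j * ((f i x)^* * g j x)).
  apply: eq_bigr => x _; rewrite rmorph_sum mulr_suml; apply: eq_bigr => i _.
  rewrite mulr_sumr; apply: eq_bigr => j _; rewrite rmorphM.
  by rewrite mulrACA [_ * d j]mulrC -!mulrA.
rewrite exchange_big; apply: eq_bigr => i _.
by rewrite exchange_big; apply: eq_bigr => j _; rewrite mulr_sumr.
Qed.

Lemma inner_unitary n (G : op n) (f g : state n) : unitary G ->
  inner (opapp G f) (opapp G g) = inner f g.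
Proof.
move=> /unitary_adj_mul HG; rewrite /opapp /inner.
transitivity (\sum_x \sum_y \sum_z ((G x y)^* * G x z) * ((f y)^* * g z)).
  apply: eq_bigr => x _; rewrite rmorph_sum mulr_suml; apply: eq_bigr => y _.
  by rewrite mulr_sumr; apply: eq_bigr => z _; rewrite rmorphM mulrACA.
rewrite exchange_big; apply: eq_bigr => y _.
rewrite exchange_big /=.
transitivity (\sum_z opid y z * ((f y)^* * g z)).
  by apply: eq_bigr => z _; rewrite -HG /opmul /adj mulr_suml.
by under eq_bigr => z _ do rewrite /opid eq_sym; rewrite sum_delta.
Qed.

(* [G X^u Z^v = C X^u' Z^v' G], read off on matrix entries. *)
Definition intertwines n (G : op n) (u v : bits n) (C : algC) (u' v' : bits n) :=
  forall x y, G x (y + u) * sgn2 (dotF2 v y) = C * sgn2 (dotF2 v' (x + u')) * G (x + u') y.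

Lemma intertwines_id n (G : op n) : intertwines G 0 0 1 0 0.
Proof. by move=> x y; rewrite !addr0 !dot0l sgn2_0 mulr1 !mul1r. Qed.

Lemma intertwines_opapp n (G : op n) u v C u' v' : intertwines G u v C u' v' ->
  forall psi x, opapp G (pauli u v psi) x = C * pauli u' v' (opapp G psi) x.
Proof.
move=> GC psi x; rewrite /opapp /pauli -(sum_bits_shift u) !mulr_sumr.
apply: eq_bigr => y _; rewrite bits_addrK mulrA GC; ring.
Qed.

Lemma mulXZ_r n (G : op n) a b x y : opmul G (XZ a b) x y = G x (y + a) * sgn2 (dotF2 b y).
Proof.
rewrite /opmul (bigD1 (y + a)) //= XZE eqxx mul1r big1 ?addr0 // => z za.
by rewrite XZE (negbTE za) mul0r mulr0.
Qed.

Lemma mulXZ_l n (G : op n) a b x y :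
  opmul (XZ a b) G x y = sgn2 (dotF2 b (x + a)) * G (x + a) y.
Proof.
rewrite /opmul (bigD1 (x + a)) //= XZE bits_addrK eqxx mul1r big1 ?addr0 // => z za.
by rewrite XZE bits_eq_add eq_sym (negbTE za) !mul0r.
Qed.

Lemma opmul_adjK n (U V : op n) : unitary U ->
  forall x y, opmul (opmul V (adj U)) U x y = V x y.
Proof.
move=> /unitary_adj_mul HU x y.
transitivity (\sum_w V x w * opmul (adj U) U w y).
  rewrite /opmul; under eq_bigr => z _ do rewrite mulr_suml.
  rewrite exchange_big; apply: eq_bigr => w _; rewrite mulr_sumr.
  by apply: eq_bigr => z _; rewrite mulrA.
by under eq_bigr => w _ do rewrite HU /opid mulrC; rewrite sum_delta.
Qed.

Lemma clifford1_intertwines (g : op 1) : clifford1 g ->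
  forall a b, exists C a' b', intertwines g a b C a' b'.
Proof.
case=> Hu Hcl a b; have [C [a' [b' gXZ]]] := Hcl a b.
exists C, a', b' => x y.
rewrite -mulXZ_r -(opmul_adjK (opmul g (XZ a b)) Hu) -mulrA -mulXZ_l.
rewrite /opmul in gXZ *; under eq_bigr => z _ do rewrite gXZ.
by rewrite mulr_sumr; apply: eq_bigr => z _; rewrite mulrA.
Qed.

Lemma intertwines_comp n (G : op n) u1 v1 C1 u1' v1' u2 v2 C2 u2' v2' :
  intertwines G u1 v1 C1 u1' v1' -> intertwines G u2 v2 C2 u2' v2' ->
  intertwines G (u1 + u2) (v1 + v2) (C1 * C2 * sgn2 (dotF2 v1 u2 + dotF2 v1' u2'))
    (u1' + u2') (v1' + v2').
Proof.
have sq w z : z = z * (sgn2 w * sgn2 w) by rewrite sgn2_sqr mulr1.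
have solve1 g r w : g * sgn2 w = r -> g = r * sgn2 w by move=> <-; rewrite -mulrA -sq.
have solve2 g r w w' : g * (sgn2 w * sgn2 w') = r -> g = r * (sgn2 w * sgn2 w').
  by move=> <-; rewrite -mulrA mulrACA -!sq.
move=> G1 G2 x y; have := G1 x (y + u2); have := G2 (x + u1') y.
rewrite [u1 + u2]addrC !addrA !(dotDl, dotDr, sgn2D) => /solve1 -> /solve2 ->.
rewrite [LHS](sq (dotF2 v1' u2')) [RHS](sq (dotF2 v1 y)) [RHS](sq (dotF2 v2 y)).
ring.
Qed.

Lemma intertwines_scalar_neq0 n (G : op n) u v C u' v' : unitary G ->
  intertwines G u v C u' v' -> C != 0.
Proof.
move=> /(unitary_col_neq0 0) [x Gx0] GC; apply/eqP => C0.
have /eqP := GC x u; rewrite bits_addrr C0 !mul0r mulf_eq0.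
by rewrite (negbTE Gx0) (negbTE (sgn2_neq0 _)).
Qed.

Lemma intertwines_scalar_uniq n (G : op n) u v C C' u' v' : unitary G ->
  intertwines G u v C u' v' -> intertwines G u v C' u' v' -> C = C'.
Proof.
move=> /(unitary_col_neq0 0) [x Gx0] GC GC'.
have := GC (x + u') 0; rewrite GC' bits_addrK.
by move/(mulIf Gx0)/(mulIf (sgn2_neq0 _)).
Qed.

(* [dotF2 v1 u2 + dotF2 v2 u1] is the commutation phase of [X^u1 Z^v1] and
   [X^u2 Z^v2]; compare [G P1 P2] with [G P2 P1]. *)
Lemma intertwines_symplectic n (G : op n) u1 v1 C1 u1' v1' u2 v2 C2 u2' v2' :
  unitary G -> intertwines G u1 v1 C1 u1' v1' -> intertwines G u2 v2 C2 u2' v2' ->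
  dotF2 v1 u2 + dotF2 v2 u1 = dotF2 v1' u2' + dotF2 v2' u1'.
Proof.
move=> HG G1 G2; have G12 := intertwines_comp G1 G2.
have G21 := intertwines_comp G2 G1.
rewrite [u2 + u1]addrC [v2 + v1]addrC [u2' + u1']addrC [v2' + v1']addrC in G21.
have C12 : C1 * C2 != 0.
  by rewrite mulf_neq0 ?(intertwines_scalar_neq0 HG G1) ?(intertwines_scalar_neq0 HG G2).
move: (intertwines_scalar_uniq HG G12 G21); rewrite [C2 * C1]mulrC.
move=> /(mulfI C12) /sgn2_inj /eqP; rewrite -subr_eq0 => /eqP E.
apply/eqP; rewrite -subr_eq0 -E !(GRing.subr_pchar2 pchar_F2); apply/eqP; ring.
Qed.

Definition qubit n (x : bits n) (q : 'I_n) : bits 1 := \row_(j < 1) x 0 q.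

Lemma tensE n (g : 'I_n -> op 1) x y : tens g x y = \prod_q g q (qubit x q) (qubit y q).
Proof. by []. Qed.

Lemma qubitE n (x : bits n) q : qubit x q = const_mx (x 0 q).
Proof. by apply/rowP => j; rewrite !mxE. Qed.

Lemma qubitD n (x y : bits n) q : qubit (x + y) q = qubit x q + qubit y q.
Proof. by apply/rowP => j; rewrite !mxE. Qed.

Lemma dot_qubit n (b y : bits n) : dotF2 b y = \sum_q dotF2 (qubit b q) (qubit y q).
Proof. by rewrite dotE; apply: eq_bigr => q _; rewrite dotE big_ord1 !mxE. Qed.

Lemma tens_intertwines n (g : 'I_n -> op 1) u v (C : 'I_n -> algC) u' v' :
  (forall q, intertwines (g q) (qubit u q) (qubit v q) (C q) (qubit u' q) (qubit v' q)) ->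
  intertwines (tens g) u v (\prod_q C q) u' v'.
Proof.
move=> gC x y; rewrite !tensE !dot_qubit !sgn2_sum -!big_split /=.
by apply: eq_bigr => q _; rewrite !qubitD gC.
Qed.

Lemma bits1_const (x : bits 1) : x = const_mx (x 0 0).
Proof. by apply/rowP => j; rewrite ord1 mxE. Qed.

Lemma dot_const1 (a b : 'F_2) : dotF2 (const_mx a : bits 1) (const_mx b) = a * b.
Proof. by rewrite dotE big_ord1 !mxE. Qed.

Lemma clifford1_frame (g : op 1) : clifford1 g -> exists e f c d : 'F_2,
  [/\ e * d + c * f = 1,
      exists C, intertwines g (const_mx 1) 0 C (const_mx e) (const_mx f) &
      exists C, intertwines g 0 (const_mx 1) C (const_mx c) (const_mx d)].
Proof.
move=> Hg; have [CX [ex [fx gX]]] := clifford1_intertwines Hg (const_mx 1) 0.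
have [CZ [ez [fz gZ]]] := clifford1_intertwines Hg 0 (const_mx 1).
have := intertwines_symplectic Hg.1 gX gZ.
rewrite (bits1_const ex) (bits1_const fx) (bits1_const ez) (bits1_const fz) in gX gZ *.
rewrite -[0 : bits 1]/(const_mx 0) !dot_const1 mul0r add0r mul1r => E.
exists (ex 0 0), (fx 0 0), (ez 0 0), (fz 0 0).
by split; [rewrite E; ring | exists CX | exists CZ].
Qed.

Definition hadamard n (u : bits n) (d : 'I_n -> 'F_2) : bits n := \row_q (u 0 q * d q).

Lemma hadamard_const0 n (u : bits n) (h : 'I_n -> 'F_2) :
  (forall q, h q = 0) -> hadamard u h = 0.
Proof. by move=> h0; apply/rowP => q; rewrite !mxE h0 mulr0. Qed.

Lemma hadamard_const1 n (u : bits n) (h : 'I_n -> 'F_2) :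
  (forall q, h q = 1) -> hadamard u h = u.
Proof. by move=> h1; apply/rowP => q; rewrite !mxE h1 mulr1. Qed.

Lemma tens_intertwines_hadamard n (g : 'I_n -> op 1) (a b e f : 'I_n -> 'F_2) :
  (forall q, exists C, intertwines (g q) (const_mx (a q)) (const_mx (b q)) C
                                         (const_mx (e q)) (const_mx (f q))) ->
  forall w, exists C, intertwines (tens g) (hadamard w a) (hadamard w b) C
                                           (hadamard w e) (hadamard w f).
Proof.
move=> gab w; have /fin_all_exists [C gC] q : exists C,
    intertwines (g q) (qubit (hadamard w a) q) (qubit (hadamard w b) q) C
                      (qubit (hadamard w e) q) (qubit (hadamard w f) q).
  rewrite !qubitE !mxE; case: (F2_01 (w 0 q)) => ->; rewrite ?mul0r ?mul1r //.
  by exists 1; apply: intertwines_id.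
by exists (\prod_q C q); apply: tens_intertwines.
Qed.

Lemma tens_clifford_frame n (g : 'I_n -> op 1) : (forall q, clifford1 (g q)) ->
  exists e f c d : 'I_n -> 'F_2,
  [/\ forall q, e q * d q + c q * f q = 1,
      forall u, exists C, intertwines (tens g) u 0 C (hadamard u e) (hadamard u f) &
      forall v, exists C, intertwines (tens g) 0 v C (hadamard v c) (hadamard v d)].
Proof.
move=> Hg; have /fin_all_exists [e /fin_all_exists [f]] := fun q => clifford1_frame (Hg q).
move=> /fin_all_exists [c /fin_all_exists [d gF]].
exists e, f, c, d; split=> [q | u | v]; first by case: (gF q).
  have := tens_intertwines_hadamard (a := fun=> 1) (b := fun=> 0) _ u.
  rewrite (@hadamard_const1 _ u (fun=> 1)) // (@hadamard_const0 _ u (fun=> 0)) //.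
  by apply=> q; case: (gF q).
have := tens_intertwines_hadamard (a := fun=> 0) (b := fun=> 1) _ v.
rewrite (@hadamard_const1 _ v (fun=> 1)) // (@hadamard_const0 _ v (fun=> 0)) //.
by apply=> q; case: (gF q).
Qed.

(** * Logical codewords and stabilizers *)

Section Code.
Variables (n k : nat) (A B : {vspace bits n}) (LX LZ : 'M['F_2]_(k, n)).
Hypotheses (orthAB : css_orth A B) (HL : logical_paulis A B LX LZ).

(* The logical basis state |s>, unnormalised. *)
Definition codeword (s : bits k) : state n := fun x => ((x + s *m LX) \in A)%:R.

Lemma LX_mul_trLZ : LX *m LZ^T = 1%:M.
Proof. by case: HL. Qed.

Lemma LZ_mul_trLX : LZ *m LX^T = 1%:M.
Proof. by rewrite -[LZ]trmxK -trmx_mul LX_mul_trLZ trmx1. Qed.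

Lemma dot_LZ_LX (t s : bits k) : dotF2 (t *m LZ) (s *m LX) = dotF2 t s.
Proof. by rewrite dot_mulmx -mulmxA LX_mul_trLZ mulmx1. Qed.

Lemma dot_LZ_A (t : bits k) a : a \in A -> dotF2 (t *m LZ) a = 0.
Proof.
case: HL => _ _ _ LZA /LZA aZ.
by rewrite dot_mulmx -[a in a *m _]trmxK -trmx_mul aZ trmx0 dot0r.
Qed.

Lemma dot_LX_B (s : bits k) b : b \in B -> dotF2 (s *m LX) b = 0.
Proof.
case: HL => _ _ LXB _ /LXB bX.
by rewrite dot_mulmx -[b in b *m _]trmxK -trmx_mul bX trmx0 dot0r.
Qed.

Lemma LX_memA_eq0 (w : bits k) : w *m LX \in A -> w = 0.
Proof.
case: HL => _ _ _ LZA /LZA /(congr1 trmx).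
by rewrite trmx_mul trmxK trmx0 -mulmxA LX_mul_trLZ mulmx1.
Qed.

Lemma LZ_memB_eq0 (w : bits k) : w *m LZ \in B -> w = 0.
Proof.
case: HL => _ _ LXB _ /LXB /(congr1 trmx).
by rewrite trmx_mul trmxK trmx0 -mulmxA LZ_mul_trLX mulmx1.
Qed.

Lemma pauli_stabilizer_codeword a b s x : a \in A -> b \in B ->
  pauli a b (codeword s) x = codeword s x.
Proof.
move=> aA bB; rewrite /pauli /codeword addrAC rpredDr //.
case xA: (x + s *m LX \in A); last by rewrite mulr0.
have -> : x + a = (x + s *m LX) + a + s *m LX by rewrite addrAC bits_addrK.
rewrite dotDr ![dotF2 b _]dotC (orthAB (rpredD xA aA) bB) dot_LX_B //.
by rewrite addr0 sgn2_0 mulr1.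
Qed.

Lemma codeword_in_code s : in_code A B (codeword s).
Proof.
by split=> [a aA | b bB] x; rewrite ?opapp_X ?opapp_Z pauli_stabilizer_codeword ?mem0v.
Qed.

Lemma pauli_codeword (w t s : bits k) x :
  pauli (w *m LX) (t *m LZ) (codeword s) x = sgn2 (dotF2 t s) * codeword (s + w) x.
Proof.
rewrite /pauli /codeword mulmxDl [s *m LX + _]addrC addrA.
case xA: (x + w *m LX + s *m LX \in A); last by rewrite !mulr0.
have -> : x + w *m LX = (x + w *m LX + s *m LX) + s *m LX by rewrite bits_addrK.
by rewrite dotDr dot_LZ_A // add0r dot_LZ_LX.
Qed.

Lemma codeword_mul s t x : codeword s x * codeword t x = (s == t)%:R * codeword s x.
Proof.
rewrite /codeword; case: eqP => [-> | st]; first by rewrite -natrM mulnb andbb mul1r.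
case xs: (x + s *m LX \in A); case xt: (x + t *m LX \in A); rewrite ?mulr0 ?mul0r //.
have := rpredD xs xt; rewrite addrACA bits_addrr add0r -mulmxDl => /LX_memA_eq0.
by move/eqP; rewrite bits_addr_eq0 => /eqP.
Qed.

Definition code_norm : algC := \sum_x codeword 0 x.

Lemma code_norm_neq0 : code_norm != 0.
Proof.
rewrite /code_norm -natr_sum pnatr_eq0 (bigD1 0) //=.
by rewrite mul0mx addr0 mem0v.
Qed.

Lemma inner_codeword s t : inner (codeword s) (codeword t) = (s == t)%:R * code_norm.
Proof.
have -> : code_norm = \sum_x codeword s x.
  rewrite /code_norm -(sum_bits_shift (s *m LX)); apply: eq_bigr => x _.
  by rewrite /codeword mul0mx addr0.
rewrite /inner mulr_sumr; apply: eq_bigr => x _.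
by rewrite conjC_nat codeword_mul.
Qed.

Lemma logical_action_codeword (G : op n) (W : op k) :
  has_logical_action A B LX LZ G W ->
  forall s x, opapp G (codeword s) x = \sum_s' W s' s * codeword s' x.
Proof.
case=> alpha [WE GW] s x; rewrite (GW _ (codeword_in_code s)).
transitivity (\sum_a \sum_b alpha a b * (sgn2 (dotF2 b s) * codeword (s + a) x)).
  by apply: eq_bigr => a _; apply: eq_bigr => b _; rewrite opapp_XZ pauli_codeword.
symmetry; transitivity (\sum_s' \sum_a \sum_b alpha a b * XZ a b s' s * codeword s' x).
  apply: eq_bigr => s' _; rewrite WE mulr_suml; apply: eq_bigr => a _.
  by rewrite mulr_suml.
rewrite exchange_big; apply: eq_bigr => a _; rewrite exchange_big; apply: eq_bigr => b _.
transitivity (\sum_s' (s' == s + a)%:R * (alpha a b * sgn2 (dotF2 b s) * codeword s' x)).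
  by apply: eq_bigr => s' _; rewrite XZE; ring.
by rewrite sum_delta mulrA.
Qed.

Section LogicalAction.
Variables (G : op n) (W : op k).
Hypotheses (HG : unitary G) (GW : has_logical_action A B LX LZ G W).

Lemma logical_action_adj_mul s t : opmul (adj W) W s t = opid s t.
Proof.
have := inner_unitary (codeword s) (codeword t) HG; rewrite inner_codeword => E.
apply: (mulIf code_norm_neq0); rewrite /opid -E.
have -> : inner (opapp G (codeword s)) (opapp G (codeword t)) =
    inner (fun x => \sum_i W i s * codeword i x) (fun x => \sum_j W j t * codeword j x).
  by rewrite /inner; apply: eq_bigr => x _; rewrite !(logical_action_codeword GW).
symmetry; rewrite inner_sum /opmul /adj mulr_suml; apply: eq_bigr => i _.
transitivity (\sum_j (j == i)%:R * ((W i s)^* * W j t * code_norm)).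
  by apply: eq_bigr => j _; rewrite inner_codeword eq_sym; ring.
by rewrite sum_delta.
Qed.

Lemma logical_action_mul_adj s t : opmul W (adj W) s t = opid s t.
Proof. by apply: kernel_mul1C; apply: logical_action_adj_mul. Qed.

Lemma codeword_span s' x : codeword s' x = \sum_s (W s' s)^* * opapp G (codeword s) x.
Proof.
transitivity (\sum_t (t == s')%:R * codeword t x); first by rewrite sum_delta.
transitivity (\sum_s \sum_t (W s' s)^* * W t s * codeword t x).
  rewrite exchange_big; apply: eq_bigr => t _.
  rewrite -[(t == s')%:R]/(opid t s') -logical_action_mul_adj /opmul /adj mulr_suml.
  by apply: eq_bigr => s _; rewrite [W t s * _]mulrC.
apply: eq_bigr => s _; rewrite (logical_action_codeword GW) mulr_sumr.
by apply: eq_bigr => t _; rewrite mulrA.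
Qed.

End LogicalAction.
End Code.

Definition basis_mx n (U : {vspace bits n}) : 'M['F_2]_(\dim U, n) :=
  \matrix_(i < \dim U) (vbasis U)`_i.

Lemma row_free_mul0 m n (M : 'M['F_2]_(m, n)) :
  (forall r : 'rV_m, r *m M = 0 -> r = 0) -> row_free M.
Proof.
move=> M0; rewrite -kermx_eq0; apply/eqP/row_matrixP => i.
by rewrite row0; apply: M0; rewrite -row_mul mulmx_ker row0.
Qed.

Lemma vbasis_nth_mem n (U : {vspace bits n}) (i : 'I_(\dim U)) : (vbasis U)`_i \in U.
Proof. by apply: vbasis_mem; apply: mem_nth; rewrite size_tuple ltn_ord. Qed.

Lemma basis_mxE n (U : {vspace bits n}) (r : 'rV_(\dim U)) :
  r *m basis_mx U = \sum_i r 0 i *: (vbasis U)`_i.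
Proof. by rewrite mulmx_sum_row; apply: eq_bigr => i _; rewrite rowK. Qed.

Lemma basis_mx_mul0 n (U : {vspace bits n}) (r : 'rV_(\dim U)) :
  r *m basis_mx U = 0 -> r = 0.
Proof.
rewrite basis_mxE => /(freeP (basis_free (vbasisP U))) r0.
by apply/rowP => i; rewrite r0 mxE.
Qed.

Lemma basis_mx_rank n (U : {vspace bits n}) : \rank (basis_mx U) = \dim U.
Proof. exact/eqP/row_free_mul0/basis_mx_mul0. Qed.

Lemma mem_basis_mx n (U : {vspace bits n}) (r : 'rV_(\dim U)) : r *m basis_mx U \in U.
Proof. by rewrite basis_mxE; apply: memv_suml => i _; apply/memvZ/vbasis_nth_mem. Qed.

Lemma mulmx_tr_basis_mx n (U : {vspace bits n}) (v : bits n) :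
  (forall u, u \in U -> dotF2 v u = 0) -> v *m (basis_mx U)^T = 0.
Proof.
move=> vU; apply/rowP => j; rewrite [RHS]mxE -(vU _ (vbasis_nth_mem j)) mxE dotE.
by apply: eq_bigr => l _; rewrite !mxE.
Qed.

Section Dual.
Variables (n k : nat) (A B : {vspace bits n}) (LX LZ : 'M['F_2]_(k, n)).
Hypotheses (orthAB : css_orth A B) (HL : logical_paulis A B LX LZ).

Let M := col_mx (basis_mx A) LX.

Lemma code_mx_free : row_free M.
Proof.
apply: row_free_mul0 => r; rewrite -[r]hsubmxK mul_row_col => r0.
have LZA : basis_mx A *m LZ^T = 0.
  apply/row_matrixP => i; rewrite row_mul rowK row0.
  case: HL => _ _ _ /(_ _ (vbasis_nth_mem i)) /(congr1 trmx).
  by rewrite trmx_mul trmxK trmx0.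
have /eqP := congr1 (mulmx^~ LZ^T) r0.
rewrite mulmxDl -!mulmxA LZA (LX_mul_trLZ HL) mulmx0 mulmx1 add0r mul0mx => /eqP rr0.
rewrite rr0 mul0mx addr0 in r0.
by rewrite (basis_mx_mul0 r0) rr0 row_mx0.
Qed.

Let K := kermx M^T.

Let dual_subK w : (forall a, a \in A -> dotF2 w a = 0) -> w *m LX^T = 0 -> (w <= K)%MS.
Proof.
move=> wA wX; apply/sub_kermxP.
by rewrite tr_col_mx mul_mx_row mulmx_tr_basis_mx // wX row_mx0.
Qed.

(* [B] is all of the orthogonal complement of [A + rowspace LX], by dimension. *)
Lemma dual_memB (v : bits n) :
  (forall a, a \in A -> dotF2 v a = 0) -> (forall s : bits k, dotF2 (s *m LX) v = 0) ->
  v \in B.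
Proof.
move=> vA vX.
have rkK : \rank K = \dim B.
  case: HL => dimABk _ _ _; rewrite mxrank_ker mxrank_tr (eqP code_mx_free); lia.
have BK : (basis_mx B <= K)%MS.
  apply/row_subP => i; rewrite rowK; apply: dual_subK => [a aA|].
    by rewrite dotC orthAB ?vbasis_nth_mem.
  case: HL => _ _ /(_ _ (vbasis_nth_mem i)) /(congr1 trmx).
  by rewrite trmx_mul trmxK trmx0.
have KB : (K <= basis_mx B)%MS by rewrite -(mxrank_leqif_sup BK).2 rkK basis_mx_rank.
have vLX : v *m LX^T = 0 by apply: dot_eq0 => s; rewrite -dot_mulmx vX.
have /submxP [D ->] := submx_trans (dual_subK vA vLX) KB.
exact: mem_basis_mx.
Qed.
End Dual.

Section Stabilizers.
Variables (n k : nat) (A B : {vspace bits n}) (LX LZ : 'M['F_2]_(k, n)).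
Hypotheses (orthAB : css_orth A B) (HL : logical_paulis A B LX LZ).

Local Notation codeword := (codeword A LX).

Lemma scalar_pauli_stabilizer (C : algC) u v :
  (forall s x, C * pauli u v (codeword s) x = codeword s x) -> u \in A /\ v \in B.
Proof.
move=> Cuv.
have uA : u \in A.
  have := Cuv 0 0; rewrite /pauli /codeword mul0mx !addr0 add0r mem0v.
  by case: (u \in A) => //; rewrite !mulr0 => /eqP; rewrite eq_sym oner_eq0.
have C_sgn s x : x + s *m LX \in A -> C * sgn2 (dotF2 v (x + u)) = 1.
  by move=> xA; have := Cuv s x; rewrite /pauli /codeword addrAC rpredDr // xA !mulr1.
have C_sgn_u : C * sgn2 (dotF2 v u) = 1.
  by have := C_sgn 0 0; rewrite mul0mx !add0r mem0v; apply.
have dot_v w s : w + s *m LX \in A -> dotF2 v w = 0.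
  move=> /C_sgn; rewrite dotDr sgn2D mulrCA C_sgn_u mulr1 -sgn2_0.
  exact: sgn2_inj.
split=> //; apply: (dual_memB orthAB HL) => [a aA | s].
  by apply: (dot_v a 0); rewrite mul0mx addr0.
by rewrite dotC; apply: (dot_v _ s); rewrite bits_addrr mem0v.
Qed.

Section Image.
Variables (G : op n) (W : op k).
Hypotheses (HG : unitary G) (GW : has_logical_action A B LX LZ G W).

Local Notation image s := (opapp G (codeword s)).

Lemma scalar_pauli_image_stabilizer (C : algC) u v :
  (forall s x, C * pauli u v (image s) x = image s x) -> u \in A /\ v \in B.
Proof.
move=> Cuv; apply: (scalar_pauli_stabilizer (C := C)) => s' x.
rewrite [RHS](codeword_span orthAB HL HG GW) /pauli (codeword_span orthAB HL HG GW).
rewrite !mulr_sumr; apply: eq_bigr => s _; rewrite -(Cuv s x) /pauli; ring.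
Qed.

Lemma pauli_image_eq (C : algC) u v u' v' :
  (forall s x, C * pauli u' v' (image s) x = pauli u v (image s) x) ->
  u + u' \in A /\ v + v' \in B.
Proof.
move=> Cuv; set w := u + u'.
apply: (scalar_pauli_image_stabilizer (C := C * sgn2 (dotF2 v w))) => s x.
have := Cuv s (x + u); rewrite /pauli -!addrA bits_addrr addr0 -/w.
move=> E; rewrite /pauli dotDl (dotDr x w v) !sgn2D.
transitivity (sgn2 (dotF2 v x) * (sgn2 (dotF2 v w) * sgn2 (dotF2 v w))
  * (C * (sgn2 (dotF2 v' (x + w)) * image s (x + w)))); first by ring.
by rewrite E sgn2_sqr mulr1 mulrA sgn2_sqr mul1r.
Qed.

Lemma logical_intertwines dx dz dx' dz' : intertwines W dx dz 1 dx' dz' ->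
  forall s x, opapp G (pauli (dx *m LX) (dz *m LZ) (codeword s)) x =
              pauli (dx' *m LX) (dz' *m LZ) (image s) x.
Proof.
move=> Wd s x; have GWs := logical_action_codeword orthAB HL GW.
transitivity (sgn2 (dotF2 dz s) * image (s + dx) x).
  rewrite /opapp mulr_sumr; apply: eq_bigr => y _.
  by rewrite (pauli_codeword HL) mulrCA.
rewrite GWs mulr_sumr.
transitivity (\sum_t W t s * pauli (dx' *m LX) (dz' *m LZ) (codeword t) x); last first.
  by rewrite /pauli GWs mulr_sumr; apply: eq_bigr => t _; rewrite mulrCA.
under [RHS]eq_bigr => t _ do rewrite (pauli_codeword HL).
rewrite -[RHS](sum_bits_shift dx'); apply: eq_bigr => s' _; rewrite bits_addrK.
by rewrite mulrA [_ * W _ _]mulrC Wd mul1r; ring.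
Qed.

Lemma intertwines_stabilizer a b C u' v' : intertwines G a b C u' v' ->
  a \in A -> b \in B -> u' \in A /\ v' \in B.
Proof.
move=> Gab aA bB; rewrite -[u']add0r -[v']add0r.
apply: (pauli_image_eq (C := C)) => s x; rewrite pauli0 -(intertwines_opapp Gab).
by apply: eq_bigr => y _; rewrite (pauli_stabilizer_codeword orthAB HL).
Qed.

Lemma intertwines_logical_mismatch dx dz dx' dz' C u' v' :
  intertwines W dx dz 1 dx' dz' -> intertwines G (dx *m LX) (dz *m LZ) C u' v' ->
  dx' *m LX + u' \in A /\ dz' *m LZ + v' \in B.
Proof.
move=> Wd Gd; apply: (pauli_image_eq (C := C)) => s x.
by rewrite -(intertwines_opapp Gd) (logical_intertwines Wd).
Qed.

End Image.
End Stabilizers.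

(** * Coordinate masks and splitting *)

Section HadamardSplit.
Variables (n : nat) (A : {vspace bits n}) (d : 'I_n -> 'F_2).
Hypothesis Ad : forall a, a \in A -> hadamard a d \in A.

Let proj_in : 'End(bits n) := linfun (mulmxr (diag_mx (\row_q d q))).
Let proj_out : 'End(bits n) := linfun (mulmxr (diag_mx (\row_q (1 - d q)))).

Let proj_inE u : proj_in u = hadamard u d.
Proof. by rewrite lfunE; apply/rowP => j; rewrite /= mul_mx_diag !mxE. Qed.

Let proj_outE u : proj_out u = u - hadamard u d.
Proof. by rewrite lfunE; apply/rowP => j; rewrite /= mul_mx_diag !mxE mulrBr mulr1. Qed.

Lemma vsplits_hadamard : vsplits A [set q | d q == 1].
Proof.
exists (proj_in @: A)%VS, (proj_out @: A)%VS; split.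
- apply/eqP; rewrite eqEsubv; apply/andP; split.
    rewrite subv_add; apply/andP; split; apply/subvP => _ /memv_imgP [a aA ->].
      by rewrite proj_inE Ad.
    by rewrite proj_outE rpredB // Ad.
  apply/subvP => a aA; have -> : a = proj_in a + proj_out a.
    by rewrite proj_inE proj_outE addrC subrK.
  by apply: memv_add; apply: memv_img.
- apply/directv_addP/eqP; rewrite -subv0; apply/subvP => v.
  rewrite memv_cap memv0 => /andP [/memv_imgP [a _ ->] /memv_imgP [a' _]].
  rewrite proj_inE proj_outE => /rowP E; apply/eqP/rowP => j; have := E j; rewrite !mxE.
  by case: (F2_01 (d j)) => ->; rewrite ?mulr0 // !mulr1 subrr.
- move=> _ /memv_imgP [a _ ->] i; rewrite inE proj_inE mxE.
  by case: (F2_01 (d i)) => ->; rewrite ?mulr0.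
- move=> _ /memv_imgP [a _ ->] i; rewrite !inE negbK proj_outE !mxE => /eqP ->.
  by rewrite mulr1 subrr.
Qed.

End HadamardSplit.

Lemma nonsplitting_hadamard_const n (A B : {vspace bits n}) (d : 'I_n -> 'F_2) :
  nonsplitting A B ->
  (forall a, a \in A -> hadamard a d \in A) -> (forall b, b \in B -> hadamard b d \in B) ->
  (forall q, d q = 0) \/ (forall q, d q = 1).
Proof.
move=> AB Ad Bd; case: (eqVneq [set q | d q == 1] set0) => [E0 | N0].
  left => q; have : q \notin [set q | d q == 1] by rewrite E0 inE.
  by rewrite inE; case: (F2_01 (d q)) => ->.
case: (eqVneq [set q | d q == 1] setT) => [ET | NT].
  right => q; have : q \in [set q | d q == 1] by rewrite ET inE.
  by rewrite inE => /eqP.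
by case: (AB _ N0 NT); split; apply: vsplits_hadamard.
Qed.

Section HadamardSymplectic.
Variables (n : nat) (A B : {vspace bits n}) (e f c d : 'I_n -> 'F_2).
Hypothesis det1 : forall q, e q * d q + c q * f q = 1.

Let sigma (p : bits n * bits n) : bits n * bits n :=
  (hadamard p.1 e + hadamard p.2 c, hadamard p.1 f + hadamard p.2 d).
Let sigma_inv (p : bits n * bits n) : bits n * bits n :=
  (hadamard p.1 d + hadamard p.2 c, hadamard p.1 f + hadamard p.2 e).

Let sigmaK : cancel sigma sigma_inv.
Proof.
case=> u v; congr (_, _); apply/rowP => j; rewrite !mxE /=.
  transitivity ((e j * d j + c j * f j) * u 0 j + (c j * d j + c j * d j) * v 0 j).
    by ring.
  by rewrite det1 F2_addrr mul1r mul0r addr0.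
transitivity ((e j * f j + e j * f j) * u 0 j + (e j * d j + c j * f j) * v 0 j).
  by ring.
by rewrite det1 F2_addrr mul1r mul0r add0r.
Qed.

Lemma hadamard_symplectic_stable :
  (forall a, a \in A -> hadamard a e \in A) -> (forall a, a \in A -> hadamard a f \in B) ->
  (forall b, b \in B -> hadamard b c \in A) -> (forall b, b \in B -> hadamard b d \in B) ->
  (forall b, b \in B -> hadamard b e \in B) /\ (forall a, a \in A -> hadamard a d \in A).
Proof.
move=> Ae Af Bc Bd; pose S := [set p : bits n * bits n | (p.1 \in A) && (p.2 \in B)].
(* [sigma] maps the finite set [S] injectively into itself, hence onto. *)
have sigmaS : sigma @: S = S.
  apply/eqP; rewrite eqEcard card_imset ?leqnn ?andbT; last exact: can_inj sigmaK.
  apply/subsetP => _ /imsetP [p + ->]; rewrite !inE => /andP [pA pB].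
  by rewrite !rpredD ?Ae ?Af ?Bc ?Bd.
have preimS p : p \in S -> sigma_inv p \in S.
  by rewrite -{1}sigmaS => /imsetP [p' p'S ->]; rewrite sigmaK.
have hadamard0 (h : 'I_n -> 'F_2) : hadamard 0 h = 0.
  by apply/rowP => j; rewrite !mxE mul0r.
split=> [b bB | a aA].
  have := preimS (0, b); rewrite !inE mem0v bB /= !hadamard0 !add0r => /(_ isT).
  by case/andP.
have := preimS (a, 0); rewrite !inE mem0v aA /= !hadamard0 !addr0 => /(_ isT).
by case/andP.
Qed.

End HadamardSymplectic.

(** * Gates acting on tuples of logical qubits *)

Section Embed.
Variables (k p : nat) (I : {set {ffun 'I_p -> 'I_k}}).
Implicit Types (tau : {ffun 'I_p -> 'I_k}) (d : bits p) (x : bits k).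

Definition lift_tuple tau d : bits k := d *m \matrix_(m, j) (tau m == j)%:R.

Lemma lift_tupleE tau d j : lift_tuple tau d 0 j = \sum_m d 0 m * (tau m == j)%:R.
Proof. by rewrite mxE; apply: eq_bigr => m _; rewrite mxE. Qed.

Lemma lift_tuple_out tau d j : j \notin codom tau -> lift_tuple tau d 0 j = 0.
Proof.
move=> jtau; rewrite lift_tupleE big1 // => m _.
by rewrite (_ : tau m == j = false) ?mulr0 //; apply: contraNF jtau => /eqP <-; exact: codom_f.
Qed.

Lemma lift_tuple_in tau d m : injective tau -> lift_tuple tau d 0 (tau m) = d 0 m.
Proof.
move=> tau_inj; rewrite lift_tupleE (bigD1 m) //= eqxx mulr1 big1 ?addr0 // => m' m'm.
by rewrite (inj_eq tau_inj) (negbTE m'm) mulr0.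
Qed.

Lemma lift_tuple0 tau : lift_tuple tau 0 = 0.
Proof. exact: mul0mx. Qed.

Lemma lift_tupleD tau d d' : lift_tuple tau (d + d') = lift_tuple tau d + lift_tuple tau d'.
Proof. exact: mulmxDl. Qed.

Lemma restrD tau x y : restr tau (x + y) = restr tau x + restr tau y.
Proof. by apply/rowP => m; rewrite !mxE. Qed.

Lemma restr_lift_tuple tau d : injective tau -> restr tau (lift_tuple tau d) = d.
Proof. by move=> tau_inj; apply/rowP => m; rewrite mxE lift_tuple_in. Qed.

Lemma restr_lift_tuple_disjoint tau tau' d :
  [disjoint codom tau & codom tau'] -> restr tau' (lift_tuple tau d) = 0.
Proof.
move=> dis; apply/rowP => m; rewrite [LHS]mxE [RHS]mxE lift_tuple_out //.
by rewrite (disjointFl dis) // codom_f.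
Qed.

Lemma dot_lift_tuple tau d x : dotF2 (lift_tuple tau d) x = dotF2 d (restr tau x).
Proof.
rewrite !dotE; under eq_bigr => j _ do rewrite lift_tupleE mulr_suml.
rewrite exchange_big; apply: eq_bigr => m _; rewrite mxE.
rewrite (bigD1 (tau m)) //= eqxx mulr1 big1 ?addr0 // => j /negbTE.
by rewrite eq_sym => ->; rewrite mulr0 mul0r.
Qed.

Lemma lift_tuple_eq0 tau d : injective tau -> (lift_tuple tau d == 0) = (d == 0).
Proof.
move=> tau_inj; apply/eqP/eqP => [d0 | ->]; last exact: lift_tuple0.
by rewrite -(restr_lift_tuple d tau_inj) d0; apply/rowP => m; rewrite !mxE.
Qed.

Lemma embed_intertwines_free (U : op p) j : (forall tau, tau \in I -> j \notin codom tau) ->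
  intertwines (embed I U) 'e_j 0 1 'e_j 0 /\ intertwines (embed I U) 0 'e_j 1 0 'e_j.
Proof.
move=> jfree; have jI : [forall t in I, j \notin codom t] by apply/forall_inP.
have restr_delta tau x : tau \in I -> restr tau (x + 'e_j) = restr tau x.
  move=> tauI; apply/rowP => m; rewrite !mxE.
  rewrite (_ : tau m == j = false) ?andbF ?addr0 //.
  by apply: contraNF (jfree _ tauI) => /eqP <-; exact: codom_f.
split=> s' s; rewrite ?addr0 ?dot0l ?dot_delta ?sgn2_0 ?mulr1 mul1r.
  rewrite /embed; congr (_ * _); first by apply: eq_bigr => t tI; rewrite !restr_delta.
  rewrite !(bigD1 j jI) /=; congr (_ * _).
    rewrite !mxE !eqxx /=.
    by case: (F2_01 (s' 0 j)) => ->; case: (F2_01 (s 0 j)) => ->.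
  by apply: eq_bigr => i /andP [_ ij]; rewrite !mxE eqxx (negbTE ij) /= !addr0.
case: (eqVneq (s' 0 j) (s 0 j)) => [-> | sj]; first exact: mulrC.
by rewrite /embed (bigD1 j jI) /= (negbTE sj) /= !(mul0r, mulr0).
Qed.

Hypothesis HI : valid_tuples I.

Lemma embed_intertwines (U : op p) tau z d z' d' : tau \in I ->
  intertwines U d z 1 d' z' ->
  intertwines (embed I U) (lift_tuple tau d) (lift_tuple tau z) 1
                          (lift_tuple tau d') (lift_tuple tau z').
Proof.
case: HI => _ Iinj Idis _ tauI Ud s' s; have tau_inj := Iinj _ tauI.
have free dd x j : [forall t in I, j \notin codom t] -> (x + lift_tuple tau dd) 0 j = x 0 j.
  by move=> /forall_inP /(_ tau tauI) jtau; rewrite mxE lift_tuple_out // addr0.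
have other dd x t : t \in I -> t != tau -> restr t (x + lift_tuple tau dd) = restr t x.
  by move=> tI ttau; rewrite restrD restr_lift_tuple_disjoint ?addr0 // Idis // eq_sym.
pose R := (\prod_(t in I | t != tau) U (restr t s') (restr t s)) *
          \prod_(j | [forall t in I, j \notin codom t]) ((s' 0 j == s 0 j)%:R : algC).
have L1 : embed I U s' (s + lift_tuple tau d) = U (restr tau s') (restr tau s + d) * R.
  rewrite /embed (bigD1 tau tauI) /= -mulrA /R restrD restr_lift_tuple //.
  congr (_ * (_ * _)); first by apply: eq_bigr => t /andP [tI ttau]; rewrite other.
  by apply: eq_bigr => j jI; rewrite free.
have L2 : embed I U (s' + lift_tuple tau d') s = U (restr tau s' + d') (restr tau s) * R.
  rewrite /embed (bigD1 tau tauI) /= -mulrA /R restrD restr_lift_tuple //.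
  congr (_ * (_ * _)); first by apply: eq_bigr => t /andP [tI ttau]; rewrite other.
  by apply: eq_bigr => j jI; rewrite free.
by rewrite L1 L2 !dot_lift_tuple restrD restr_lift_tuple // mulrAC Ud !mulrA.
Qed.

End Embed.

Definition changes_pauli_part p (U : op p) := exists z d z' d' : bits p,
  intertwines U d z 1 d' z' /\ ((z = 0 /\ d' != d) \/ (d = 0 /\ z' != z)).

Lemma delta_neq0 n (j : 'I_n) : ('e_j : bits n) != 0.
Proof. by apply/eqP => /rowP /(_ j); rewrite !mxE !eqxx; apply/eqP. Qed.

Lemma intertwines_Hgate_X : intertwines Hgate 'e_0 0 1 0 'e_0.
Proof.
move=> x y; rewrite /Hgate addr0 dot0l sgn2_0 mulr1 mul1r dotDr sgn2D (dotC x 'e_0).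
ring.
Qed.

Lemma intertwines_Hgate_Z : intertwines Hgate 0 'e_0 1 'e_0 0.
Proof.
by move=> x y; rewrite /Hgate !addr0 dot0l sgn2_0 !mul1r dotDl sgn2D; ring.
Qed.

Lemma PHgateE x y : PHgate x y = Pgate x x * Hgate x y.
Proof.
rewrite /PHgate /opmul (bigD1 x) //= big1 ?addr0 // => z zx.
by rewrite /Pgate eq_sym (negbTE zx) !mul0r.
Qed.

Lemma HPgateE x y : HPgate x y = Hgate x y * Pgate y y.
Proof.
rewrite /HPgate /opmul (bigD1 y) //= big1 ?addr0 // => z zy.
by rewrite /Pgate (negbTE zy) mul0r mulr0.
Qed.

Lemma intertwines_PHgate_X : intertwines PHgate 'e_0 0 1 0 'e_0.
Proof.
move=> x y; rewrite !PHgateE -mulrA intertwines_Hgate_X addr0; ring.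
Qed.

Lemma intertwines_HPgate_Z : intertwines HPgate 0 'e_0 1 'e_0 0.
Proof.
by move=> x y; rewrite !HPgateE mulrAC intertwines_Hgate_Z addr0; ring.
Qed.

Lemma ord2_cases (j : 'I_2) : j = ord0 \/ j = ord_max.
Proof. by case: j => -[|[|//]] j2; [left | right]; apply: val_inj. Qed.

Lemma intertwines_CNOTgate_X : intertwines CNOTgate 'e_0 0 1 ('e_0 + 'e_ord_max) 0.
Proof.
move=> x y; rewrite !dot0l sgn2_0 mulr1 !mul1r /CNOTgate -bits_eq_add.
congr ((_ == _)%:R); apply/rowP => j; rewrite !mxE.
by case: (ord2_cases j) => -> /=; ring.
Qed.

Lemma Hgate_changes_pauli_part : changes_pauli_part Hgate.
Proof.
exists 0, 'e_0, 'e_0, 0; split; first exact: intertwines_Hgate_X.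
by left; rewrite eq_sym delta_neq0.
Qed.

Lemma PHgate_changes_pauli_part : changes_pauli_part PHgate.
Proof.
exists 0, 'e_0, 'e_0, 0; split; first exact: intertwines_PHgate_X.
by left; rewrite eq_sym delta_neq0.
Qed.

Lemma HPgate_changes_pauli_part : changes_pauli_part HPgate.
Proof.
exists 'e_0, 0, 0, 'e_0; split; first exact: intertwines_HPgate_Z.
by right; rewrite eq_sym delta_neq0.
Qed.

Lemma CNOTgate_changes_pauli_part : changes_pauli_part CNOTgate.
Proof.
exists 0, 'e_0, 0, ('e_0 + 'e_ord_max); split; first exact: intertwines_CNOTgate_X.
by left; split=> //; rewrite -subr_eq0 addrAC subrr add0r delta_neq0.
Qed.

(** * Non-addressability *)

Section CliffordFrame.
Variables (n k : nat) (A B : {vspace bits n}) (LX LZ : 'M['F_2]_(k, n)).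
Hypotheses (orthAB : css_orth A B) (HL : logical_paulis A B LX LZ).
Variables (p : nat) (U : op p) (I : {set {ffun 'I_p -> 'I_k}}) (G : op n).
Hypotheses (HI : valid_tuples I) (HG : unitary G).
Hypothesis GU : has_logical_action A B LX LZ G (embed I U).
Variables (e f c d : 'I_n -> 'F_2).
Hypothesis GX : forall u, exists C, intertwines G u 0 C (hadamard u e) (hadamard u f).
Hypothesis GZ : forall v, exists C, intertwines G 0 v C (hadamard v c) (hadamard v d).

Lemma frame_stable_A a : a \in A -> hadamard a e \in A /\ hadamard a f \in B.
Proof.
move=> aA; have [C Ga] := GX a.
by apply: (intertwines_stabilizer orthAB HL HG GU Ga aA); apply: mem0v.
Qed.

Lemma frame_stable_B b : b \in B -> hadamard b c \in A /\ hadamard b d \in B.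
Proof.
move=> bB; have [C Gb] := GZ b.
by apply: (intertwines_stabilizer orthAB HL HG GU Gb) => //; apply: mem0v.
Qed.

Lemma frame_e_neq0 : ~ forall q, e q = 0.
Proof.
move=> e0; case: HI => _ _ _ [j jfree].
have [Wj _] := embed_intertwines_free U jfree.
have [C Gj] := GX ('e_j *m LX); rewrite -(mul0mx _ LZ) in Gj.
have [] := intertwines_logical_mismatch orthAB HL HG GU Wj Gj.
by rewrite hadamard_const0 // addr0 => /(LX_memA_eq0 HL) /eqP; rewrite (negbTE (delta_neq0 j)).
Qed.

Lemma frame_d_neq0 : ~ forall q, d q = 0.
Proof.
move=> d0; case: HI => _ _ _ [j jfree].
have [_ Wj] := embed_intertwines_free U jfree.
have [C Gj] := GZ ('e_j *m LZ); rewrite -(mul0mx _ LX) in Gj.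
have [_] := intertwines_logical_mismatch orthAB HL HG GU Wj Gj.
by rewrite hadamard_const0 // addr0 => /(LZ_memB_eq0 HL) /eqP; rewrite (negbTE (delta_neq0 j)).
Qed.

Lemma frame_not_trivial :
  changes_pauli_part U -> ~ ((forall q, e q = 1) /\ (forall q, d q = 1)).
Proof.
case=> [z [x [z' [x' [Ux xz]]]]] [e1 d1].
case: HI => /set0Pn [tau tauI] Iinj _ _; have tau_inj := Iinj _ tauI.
move: (embed_intertwines HI tauI Ux); case: xz => [[-> x'x] | [-> z'z]] Wtau.
  have [C Gx] := GX (lift_tuple tau x *m LX).
  rewrite -(mul0mx _ LZ) -(lift_tuple0 tau) in Gx.
  have [] := intertwines_logical_mismatch orthAB HL HG GU Wtau Gx.
  rewrite hadamard_const1 // -mulmxDl -lift_tupleD => /(LX_memA_eq0 HL) /eqP.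
  by rewrite lift_tuple_eq0 // bits_addr_eq0 (negbTE x'x).
have [C Gz] := GZ (lift_tuple tau z *m LZ).
rewrite -(mul0mx _ LX) -(lift_tuple0 tau) in Gz.
have [_] := intertwines_logical_mismatch orthAB HL HG GU Wtau Gz.
rewrite hadamard_const1 // -mulmxDl -lift_tupleD => /(LZ_memB_eq0 HL) /eqP.
by rewrite lift_tuple_eq0 // bits_addr_eq0 (negbTE z'z).
Qed.
End CliffordFrame.

Lemma not_partially_addressable n (A B : {vspace bits n}) k (LX LZ : 'M['F_2]_(k, n))
    p (U : op p) :
  css_orth A B -> nonsplitting A B -> logical_paulis A B LX LZ ->
  changes_pauli_part U -> ~ partially_addressable A B LX LZ U.
Proof.
move=> orthAB nsAB HL UP [I [HI [g [gC [HG _] GU]]]].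
have [e [f [c [d [det GX GZ]]]]] := tens_clifford_frame gC.
have stA := frame_stable_A orthAB HL HG GU GX.
have stB := frame_stable_B orthAB HL HG GU GZ.
have [Be Ad] := hadamard_symplectic_stable det (fun a aA => (stA a aA).1)
  (fun a aA => (stA a aA).2) (fun b bB => (stB b bB).1) (fun b bB => (stB b bB).2).
have [d0 | d1] := nonsplitting_hadamard_const nsAB Ad (fun b bB => (stB b bB).2).
  exact: (frame_d_neq0 orthAB HL HI HG GU GZ).
have [e0 | e1] := nonsplitting_hadamard_const nsAB (fun a aA => (stA a aA).1) Be.
  exact: (frame_e_neq0 orthAB HL HI HG GU GX).
exact: (frame_not_trivial orthAB HL HI HG GU GX GZ UP).
Qed.

Theorem proposition9 (n : nat) (A B : {vspace 'rV['F_2]_n}) :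
  css_orth A B -> nonsplitting A B ->
  forall (k : nat) (LX LZ : 'M['F_2]_(k, n)), logical_paulis A B LX LZ ->
  [/\ ~ partially_addressable A B LX LZ Hgate,
      ~ partially_addressable A B LX LZ PHgate,
      ~ partially_addressable A B LX LZ HPgate &
      ~ partially_addressable A B LX LZ CNOTgate].
Proof.
move=> orthAB nsAB k LX LZ HL.
split; apply: not_partially_addressable => //.
- exact: Hgate_changes_pauli_part.
- exact: PHgate_changes_pauli_part.
- exact: HPgate_changes_pauli_part.
- exact: CNOTgate_changes_pauli_part.
Qed.
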